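(* Let $s$ be a positive integer, $\alpha_1,\dotsc,\alpha_d\in\mathbb{C}$, $z_1,\dotsc,z_d\in\mathbb{C}$, and $Q(z)=\sum_{j=1}^d\alpha_j(z-z_j)^{-s}$. Then for every $n\ge0$, $y=Q^{(n)}$ satisfies $$\sum_{i=0}^d\frac{e_i(z)}{(s+n)(s+n+1)\cdots(s+n+i-1)}\frac{\mathrm{d}^iy}{\mathrm{d}z^i}=0,$$ where $e_i(z)$ is the $i$-th elementary symmetric function of the $d$ quantities $z-z_1,\dotsc,z-z_d$, and $e_0=1$ (the empty product in the denominator for $i=0$ is $1$). *)

From HB Require Import structures.
From mathcomp Require Import all_boot all_order all_algebra.
From mathcomp Require Import complex.
From mathcomp Require Import all_classical all_reals all_analysis.
Set Implicit Arguments. Unset Strict Implicit. Unset Printing Implicit Defensive.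
Import Order.TTheory GRing.Theory Num.Theory.
Import numFieldNormedType.Exports.
Local Open Scope ring_scope.

Definition Qfun (R : realType) (d s : nat) (alpha zs : 'I_d -> R[i]) (z : R[i]) : R[i] :=
  \sum_(j < d) alpha j * (z - zs j) ^- s.

Definition esym_shift (R : realType) (d : nat) (zs : 'I_d -> R[i]) (i : nat) (z : R[i]) : R[i] :=
  \sum_(A : {set 'I_d} | #|A| == i) \prod_(j in A) (z - zs j).

Definition rising (R : realType) (m i : nat) : R[i] := \prod_(k < i) (m + k)%:R.

From HB Require Import structures.
From mathcomp Require Import all_boot all_order all_algebra.
From mathcomp Require Import complex.
From mathcomp Require Import all_classical all_reals all_analysis.
From mathcomp Require Import ring.
Set Implicit Arguments.
Unset Strict Implicit.
Unset Printing Implicit Defensive.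
Import Order.TTheory GRing.Theory Num.Theory.
Import numFieldNormedType.Exports.
Local Open Scope ring_scope.
Local Open Scope classical_set_scope.

(* Every term of Q is an inverse power of z - z_j, so
   Q^(k)(z) = sum_j alpha_j (-1)^k s(s+1)...(s+k-1) (z - z_j)^-(s+k).
   Dividing Q^(n+i) by (s+n)...(s+n+i-1) leaves, for each j, a factor independent
   of i times (z_j - z)^-i.  Hence the j-th contribution to the left-hand side is a
   multiple of sum_i e_i(z) (z_j - z)^-i = (z_j - z)^-d prod_k ((z - z_k) + (z_j - z)),
   which vanishes because of the factor k = j. *)

Lemma prod_addr_esym (R : comNzRingType) (d : nat) (w : 'I_d -> R) (u : R) :
  \prod_(k < d) (w k + u) =
  \sum_(i < d.+1) (\sum_(A : {set 'I_d} | #|A| == i) \prod_(j in A) w j) * u ^+ (d - i).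
Proof.
have card_le (A : {set 'I_d}) : (#|A| <= d)%N.
  by rewrite -[X in (_ <= X)%N]card_ord max_card.
have expand_subset (A : {set 'I_d}) :
    \prod_(k < d) (if k \in A then w k else u) = \prod_(k in A) w k * u ^+ (d - #|A|).
  rewrite (bigID (mem A)) /=; congr (_ * _); first by apply: eq_bigr => k ->.
  rewrite (eq_bigr (fun=> u)) => [|k /negbTE -> //].
  rewrite prodr_const; congr (_ ^+ _); apply/eqP.
  by rewrite -(eqn_add2l #|A|) subnKC ?card_le // cardC card_ord.
rewrite bigA_distr; under eq_bigr do rewrite expand_subset.
rewrite (partition_big (fun A : {set 'I_d} => inord #|A| : 'I_d.+1) xpredT) //=.
apply: eq_bigr => i _; rewrite mulr_suml.
have inord_card (A : {set 'I_d}) : (inord #|A| : 'I_d.+1) = #|A| :> nat.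
  by rewrite inordK // ltnS card_le.
by apply: eq_big => [A|A /eqP <-]; rewrite -?val_eqE /= inord_card.
Qed.

Lemma sum_esym_shift_invX (R : realType) (d : nat) (zs : 'I_d -> R[i]) (z : R[i]) (j : 'I_d) :
  z != zs j -> \sum_(i < d.+1) esym_shift zs i z * (zs j - z) ^- i = 0.
Proof.
rewrite -subr_eq0 -oppr_eq0 opprB => u_neq0.
apply: (mulIf (expf_neq0 d u_neq0)); rewrite mul0r mulr_suml.
have -> : \sum_(i < d.+1) esym_shift zs i z * (zs j - z) ^- i * (zs j - z) ^+ d =
    \prod_(k < d) ((z - zs k) + (zs j - z)).
  rewrite prod_addr_esym; apply: eq_bigr => i _.
  have i_le_d : (i <= d)%N by rewrite -ltnS.
  by rewrite (exprB i_le_d) ?unitfE // mulrAC -mulrA.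
by rewrite (bigD1 j) //= subrKA subrr mul0r.
Qed.

Lemma risingS (R : realType) (m k : nat) : rising R m k.+1 = rising R m k * (m + k)%:R.
Proof. by rewrite /rising big_ord_recr. Qed.

Lemma rising_addn (R : realType) (m k l : nat) :
  rising R m (l + k) = rising R m k * rising R (m + k) l.
Proof.
elim: l => [|l IHl]; first by rewrite /rising big_ord0 mulr1.
by rewrite addSn !risingS IHl -mulrA addnA addnAC.
Qed.

Lemma rising_neq0 (R : realType) (m k : nat) : (0 < m)%N -> rising R m k != 0.
Proof.
move=> m_gt0; elim: k => [|k IHk]; first by rewrite /rising big_ord0 oner_eq0.
by rewrite risingS mulf_neq0 // pnatr_eq0 -lt0n ltn_addr.
Qed.

Lemma open_neq_all (K : numFieldType) (I : finType) (a : I -> K) :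
  open [set x : K | forall i, x != a i].
Proof.
rewrite openE => x x_neq_a.
have near_neq i : \forall y \near x, y != a i.
  exists `|x - a i|; first by rewrite /= normr_gt0 subr_eq0.
  by move=> y /= xy; apply: contraTneq xy => ->; rewrite ltxx.
exact: filter_forall near_neq.
Qed.

Lemma derive1n_eq_on_open (K : numFieldType) (U : set K) (F : nat -> K -> K) :
  open U -> (forall k x, U x -> is_derive x 1 (F k) (F k.+1 x)) ->
  forall k x, U x -> derive1n k (F 0) x = F k x.
Proof.
rewrite openE => U_open dF; elim=> [//|k IHk] x Ux.
rewrite derive1nS derive1E (near_eq_derive (g := F k)).
  by have [_ ->] := dF k x Ux.
exact: filterS IHk (U_open x Ux).
Qed.

Lemma derive1nD (K : numFieldType) (V : normedModType K) (f : K -> V) (m n : nat) :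
  derive1n m (derive1n n f) = derive1n (m + n) f.
Proof. by rewrite /derive1n iterD. Qed.

Lemma is_derive_invX_subr (K : numFieldType) (a x : K) (m : nat) : x != a ->
  is_derive x 1 (fun y => (y - a) ^- m) (- m%:R * (x - a) ^- m.+1).
Proof.
rewrite -subr_eq0 => xa_neq0.
have dpow : is_derive x 1 (fun y => (y - a) ^+ m) (m%:R * (x - a) ^+ m.-1).
  have := is_deriveX m (is_derive_shift x 1 (- a)).
  by rewrite [_ *: _]mulr1; congr is_derive; apply/funext => y; rewrite exprfctE.
apply: DeriveDef; first by apply: derivableV; [exact: expf_neq0 | exact: ex_derive].
rewrite deriveV ?expf_neq0 // derive_val /GRing.scale /=.
case: m {dpow} => [|k]; first by rewrite !mul0r mulr0 oppr0 mul0r.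
have wk_neq0 : (x - a) ^+ k != 0 by exact: expf_neq0.
rewrite !exprSr /=; field.
by rewrite wk_neq0 xa_neq0.
Qed.

Section DerivativesOfQ.
Variables (R : realType) (d s : nat) (alpha zs : 'I_d -> R[i]).
Local Notation C := (R[i] : numFieldType).

Definition Qderiv (k : nat) (x : C) : C :=
  \sum_(j < d) alpha j * ((-1) ^+ k * rising R s k) * (x - zs j) ^- (s + k).

Lemma is_derive_Qderiv (k : nat) (x : C) : (forall j, x != zs j) ->
  is_derive x 1 (Qderiv k) (Qderiv k.+1 x).
Proof.
move=> x_good.
have -> : Qderiv k = \sum_(j < d) (alpha j * ((-1) ^+ k * rising R s k)) \*:
    (fun y : C => ((y - zs j) ^+ (s + k))^-1).
  by apply/funext => y; rewrite fct_sumE.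
apply: is_derive_eq; first by apply: is_derive_sum => j; apply/is_deriveZ/is_derive_invX_subr.
by apply: eq_bigr => j _; rewrite risingS addnS !exprS /GRing.scale /=; ring.
Qed.

Lemma derive1n_Qfun (k : nat) (x : C) : (forall j, x != zs j) ->
  @derive1n C C k (Qfun s alpha zs) x = Qderiv k x.
Proof.
have -> : Qfun s alpha zs = Qderiv 0.
  by apply/funext => y; apply: eq_bigr => j _; rewrite /rising big_ord0 !mulr1 addn0.
apply: (derive1n_eq_on_open (open_neq_all (a := zs))) => {}k {}x.
exact: is_derive_Qderiv.
Qed.

Lemma Qderiv_addn_div_rising (n i : nat) (z : C) : (0 < s)%N -> (forall j, z != zs j) ->
  Qderiv (i + n) z / rising R (s + n) i =
  \sum_(j < d) alpha j * (-1) ^+ n * rising R s n * (z - zs j) ^- (s + n) * (zs j - z) ^- i.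
Proof.
move=> s_gt0 z_good; rewrite /Qderiv mulr_suml; apply: eq_bigr => j _.
have w_neq0 : z - zs j != 0 by rewrite subr_eq0.
have r_neq0 : rising R (s + n) i != 0 by rewrite rising_neq0 // ltn_addr.
rewrite rising_addn -[zs j - z]opprB [(- _) ^+ i]exprNn invfM invr_sign addnCA !exprD.
(* [field] fails on powers of the constant [-1] with a symbolic exponent. *)
move: ((-1) ^+ i) ((-1) ^+ n) => sign_i sign_n.
by field; rewrite r_neq0 !expf_neq0.
Qed.

End DerivativesOfQ.

Theorem proposition5p2 (R : realType) (d s : nat) (alpha zs : 'I_d -> R[i]) :
  (0 < s)%N ->
  forall (n : nat) (z : R[i]), (forall j : 'I_d, z != zs j) ->
  let y : R[i] -> R[i] := @derive1n (R[i] : numFieldType) (R[i] : numFieldType) n (Qfun s alpha zs) in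
  \sum_(i < d.+1)
     esym_shift zs i z / rising R (s + n) i
       * @derive1n (R[i] : numFieldType) (R[i] : numFieldType) i y z = 0.
Proof.
move=> s_gt0 n z z_good y.
pose c j := alpha j * (-1) ^+ n * rising R s n * (z - zs j) ^- (s + n).
transitivity (\sum_(i < d.+1) \sum_(j < d) c j * (esym_shift zs i z * (zs j - z) ^- i)).
  apply: eq_bigr => i _.
  rewrite /y derive1nD derive1n_Qfun // mulrAC -mulrA.
  rewrite Qderiv_addn_div_rising // mulr_sumr.
  by apply: eq_bigr => j _; rewrite mulrCA.
rewrite exchange_big /=; apply: big1 => j _.
by rewrite -mulr_sumr sum_esym_shift_invX ?mulr0.
Qed.
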